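(* Let $n,m$ be positive integers and $\mathbf{r}=(r_1,\dots,r_m)$, $\mathbf{s}=(s_1,\dots,s_m)$ sequences of nonnegative integers with sums $r$ and $s$. Then \begin{multline*} \sum_{d_0,d_1,\dots,d_{n}\ge 0} |\mathrm{SB}(n,\mathbf{r},\mathbf{s};d_0,d_1,\dots,d_{n})| \frac{t_0^{d_0} t_1^{d_1} \cdots t_{n}^{d_{n}}}{d_0!d_1!\cdots d_{n}!} =\prod_{i=1}^n (t_0 + t_{1} +\dots + t_{i-1})^r (t_i + t_{i+1} +\dots + t_{n})^s\\ \times \prod_{i=1}^m (t_0+t_1+\dots+t_n)^{r_is_i} \prod_{1\le i<j\le n} \left(t_i + t_{i+1} +\dots + t_{j-1}\right)^m. \end{multline*}
   Context: For nonnegative integers $p,q$, the $(n,p,q)$-staircase is the set of cells $(i,j)$ with $1\le i\le p+n$, $1\le j\le n+q$, $i\le j+p$; the cell $(j+p,j)$ ($1\le j\le n$) is its $j$th diagonal cell (row $i>p$ contains $(i,i-p)$, column $j\le n$ contains $(j+p,j)$, other rows/columns contain no diagonal cell). Take pages = the $(n,r_i,s_i)$-staircases, $1\le i\le m$, identifying the $j$th diagonal cells of all pages for each $j$. An $(n,\mathbf{r},\mathbf{s})$-Selberg book is a filling of the resulting cells with $1,\dots,N$, $N=(r+s+1)n+m\binom n2+\sum_i r_is_i$, each used once, such that in each page every non-diagonal cell has entry larger than that of the diagonal cell in its row (if any) and smaller than that of the diagonal cell in its column (if any). With $e_j$ the entry of the $j$th diagonal cell, $e_0=0$, $e_{n+1}=N+1$,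 $\mathrm{SB}(n,\mathbf{r},\mathbf{s};d_0,\dots,d_n)$ is the set of such books with $d_j=e_{j+1}-e_j-1$ for $j=0,\dots,n$. *)

From HB Require Import structures.
From mathcomp Require Import all_boot all_order all_algebra.
From mathcomp Require Import mpoly.

Set Implicit Arguments.
Unset Strict Implicit.
Unset Printing Implicit Defensive.

Import Order.TTheory GRing.Theory Num.Theory.

(* Pages are indexed by i : 'I_m (page i here = page i+1 of
   the paper); r, s : 'I_m -> nat are the sequences r_1..r_m, s_1..s_m.
   Rows/columns a, b and diagonal indices j are 1-based natural numbers, as
   in the paper. *)

Section SelbergBook.
Variables (n m : nat) (r s : 'I_m -> nat).

Definition rsum := \sum_(i < m) r i.
Definition ssum := \sum_(i < m) s i.

Definition SB_N : nat :=
  (rsum + ssum + 1) * n + m * 'C(n, 2) + \sum_(i < m) r i * s i.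

(* bound for row/column coordinates *)
Definition SB_K : nat := n + rsum + ssum.

Definition page_cell (i : 'I_m) (a b : nat) : bool :=
  [&& 1 <= a <= r i + n, 1 <= b <= n + s i & a <= b + r i].

Definition diag_cell (i : 'I_m) (a b : nat) : bool :=
  (1 <= b <= n) && (a == b + r i).

Definition ndcell (c : 'I_m * 'I_SB_K.+1 * 'I_SB_K.+1) : bool :=
  page_cell c.1.1 c.1.2 c.2 && ~~ diag_cell c.1.1 c.1.2 c.2.

(* Cells of the book: the n (identified) diagonal cells (inl k stands for
   the (k+1)-th diagonal cell), plus the non-diagonal cells of all pages. *)
Definition book_cell : finType :=
  ('I_n + {c : 'I_m * 'I_SB_K.+1 * 'I_SB_K.+1 | ndcell c})%type.

Definition filling := {ffun book_cell -> 'I_SB_N.+1}.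

(* entry of the j-th diagonal cell, 1 <= j <= n *)
Definition diag_entry (f : filling) (j : nat) : nat :=
  oapp (fun k : 'I_n => val (f (inl k))) 0 (insub j.-1 : option 'I_n).

Definition e_ (f : filling) (j : nat) : nat :=
  if j == 0 then 0 else if j <= n then diag_entry f j else SB_N.+1.

Definition is_filling (f : filling) : bool :=
  perm_eq [seq val (f c) | c <- enum book_cell] (iota 1 SB_N).

(* every non-diagonal cell (a,b) of page i has an entry larger than the
   diagonal cell in its row (row a contains the diagonal cell of index
   a - r_i iff a > r_i) and smaller than the diagonal cell in its column
   (column b contains the diagonal cell of index b iff b <= n). *)
Definition book_condition (f : filling) : bool :=
  [forall c : {c : 'I_m * 'I_SB_K.+1 * 'I_SB_K.+1 | ndcell c},
     let i := (val c).1.1 in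
     let a := val (val c).1.2 in
     let b := val (val c).2 in
     let x := val (f (inr c)) in
     ((r i < a) ==> (diag_entry f (a - r i) < x)) &&
     ((b <= n) ==> (x < diag_entry f b))].

Definition is_selberg_book (f : filling) : bool :=
  is_filling f && book_condition f.

Definition SB (d : 'I_n.+1 -> nat) : {set filling} :=
  [set f : filling | is_selberg_book f &&
     [forall j : 'I_n.+1, e_ f j.+1 == e_ f j + d j + 1]].

End SelbergBook.

Definition tsum (n a b : nat) : {mpoly rat[n.+1]} :=
  \sum_(a <= k < b) 'X_(inord k).

From HB Require Import structures.
From mathcomp Require Import all_boot all_order all_algebra.
From mathcomp Require Import mpoly.
From mathcomp Require Import zify ring.
Import GRing.Theory Num.Theory.
Set Implicit Arguments.
Unset Strict Implicit.
Unset Printing Implicit Defensive.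

(* With e_0 = 0 and e_(n+1) = N+1, the entry of a non-diagonal cell must lie
   strictly between e_lo and e_hi, where lo is the index of the diagonal cell in
   its row (0 if there is none) and hi that of the diagonal cell in its column
   (n+1 if there is none); equivalently, it lies in a gap (e_j, e_(j+1)) with
   lo <= j < hi.  The right-hand side is the product over the non-diagonal cells
   of t_lo + ... + t_(hi-1), so its coefficient of t^d counts the assignments of
   cells to gaps within these windows that put d_j cells into gap j.  A book with
   gap sizes d is such an assignment together with a bijection, for each j,
   between the d_j cells of gap j and the d_j values of that gap: this gives
   d_0! ... d_n! books per assignment. *)

Lemma card_uniq_tuples_labelled (B J : finType) (label : B -> J) n
    (ls : seq J) (A : pred B) : size ls = n ->
  #|[set t : n.-tuple B | [&& all A t, uniq t & map label t == ls]]| =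
  \prod_(j : J) #|[predI A & [pred b | label b == j]]| ^_ count_mem j ls.
Proof.
elim: n ls A => [|n IHn] [|l ls] A //= => [_|[size_ls]].
  by rewrite big1 // (@eq_card1 _ [tuple]) // => t; rewrite [t]tuple0 inE.
rewrite -sum1dep_card.
rewrite (partition_big (@thead _ _) [predI A & [pred b | label b == l]]) /=; last first.
  case/tupleP=> x t; rewrite theadE /= => /and3P[/andP[Ax _] _ /eqP[lx _]].
  by apply/andP; split; rewrite // inE /= lx.
transitivity (\sum_(x in [predI A & [pred b | label b == l]]) \prod_(j : J)
    #|[predI [predD1 A & x] & [pred b | label b == j]]| ^_ count_mem j ls).
  apply: eq_bigr => x /andP[Ax /eqP lx].
  rewrite -(IHn ls [predD1 A & x] size_ls) -sum1dep_card.
  rewrite (reindex (fun t : n.-tuple B => [tuple of x :: t])) /=; last first.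
    pose ttail (t : n.+1.-tuple B) := [tuple of behead t].
    exists ttail => [t _ | t /andP[_ /eqP <-]]; first exact: val_inj.
    by rewrite -tuple_eta.
  apply: eq_bigl => t; have Ax' : A x := Ax.
  rewrite Ax' theadE eqxx andbT /= eqseq_cons lx eqxx /=.
  rewrite all_predI all_predC has_pred1.
  by case: (x \in t); case: (all A t); case: (uniq t).
rewrite [RHS](bigD1 l) //= eqxx add1n ffactnS -mulnA -sum_nat_const.
apply: eq_bigr => x /andP[Ax lx]; rewrite (bigD1 l) //=; congr (_ * _).
  congr (_ ^_ _); rewrite [in RHS](cardD1 x) inE Ax lx add1n.
  by apply: eq_card => y; rewrite !inE andbA.
apply: eq_bigr => j /negbTE jl; rewrite eq_sym jl; congr (_ ^_ _).
apply: eq_card => y.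
rewrite !inE; case: eqP => [->|] //=; rewrite (eqP lx) eq_sym jl.
by rewrite andbF.
Qed.

Lemma card_inj_ffuns_labelled (A B J : finType) (al : A -> J) (be : B -> J) :
  #|[set h : {ffun A -> B} | injectiveb h && [forall a, be (h a) == al a]]| =
  \prod_(j : J) #|[pred b | be b == j]| ^_ #|[pred a | al a == j]|.
Proof.
have := @card_uniq_tuples_labelled B J be #|A| (map al (enum A)) predT.
rewrite size_map -cardT => /(_ erefl) card_tuples.
transitivity (\prod_(j : J) #|[predI predT & [pred b | be b == j]]| ^_
      count_mem j [seq al i | i <- enum A]); last first.
  apply: eq_bigr => j _; congr (_ ^_ _).
  rewrite count_map cardE /enum_mem size_filter count_filter.
  by apply: eq_count => x; rewrite !inE andbT.
rewrite -card_tuples.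
have bijFF: {on (_ : pred _), bijective (@Finfun A B)}.
  by exists fgraph => x _; [apply: FinfunK | apply: fgraphK].
rewrite -(on_card_preimset (bijFF _)); apply: eq_card => /= t.
rewrite !inE /= all_predT /=.
have -> : injectiveb (Finfun t) = uniq t.
  by rewrite /injectiveb /dinjectiveb -codomE codom_ffun FinfunK.
congr (_ && _).
have -> : [seq be i | i <- t] = [seq be (Finfun t a) | a <- enum A].
  by rewrite -[in LHS](FinfunK t) -codom_ffun codomE -map_comp.
apply/forallP/eqP => [label_eq | /eqP label_eq a].
  by apply: eq_map => a; apply/eqP/label_eq.
by apply/eqP; move/eqP/eq_in_map: label_eq; apply; rewrite mem_enum.
Qed.

Lemma prod_ffact_eq_sum (I : finType) (d k : I -> nat) :
  \sum_i k i = \sum_i d i ->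
  \prod_i d i ^_ k i = if [forall i, k i == d i] then \prod_i (d i)`! else 0.
Proof.
move=> eq_sum; case: forallP => [eq_kd | /forallP neq_kd].
  by apply: eq_bigr => i _; rewrite (eqP (eq_kd i)) ffactnn.
case: (pickP (fun i => d i < k i)) => [i0 lt_d_k | k_le_d].
  by rewrite (bigD1 i0) //= ffact_small // mul0n.
have le_k_d i : k i <= d i by rewrite leqNgt k_le_d.
case/negP: neq_kd; apply/forallP => i.
have := @sumnB _ (index_enum I) xpredT _ _ (fun i _ => le_k_d i).
rewrite eq_sum subnn => /eqP; rewrite sum_nat_eq0 => /forallP /(_ i) /=.
by rewrite subn_eq0 eqn_leq le_k_d.
Qed.

Section BigNat.
Variables (R : Type) (idx : R) (op : Monoid.com_law idx).

Lemma big_nat_cond_itv K lo hi (P : pred nat) (F : nat -> R) : hi <= K ->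
    (forall a, a < K -> P a = (lo <= a < hi)) ->
  \big[op/idx]_(0 <= a < K | P a) F a = \big[op/idx]_(lo <= a < hi) F a.
Proof.
move=> hi_le P_itv; rewrite (@big_nat_widenl _ _ _ lo 0) // (big_nat_widen _ _ _ _ _ hi_le).
rewrite big_nat_cond [RHS]big_nat_cond; apply: eq_bigl => a.
case: (ltnP a K) => aK; first by rewrite P_itv.
by case: (ltnP a hi) => ahi; rewrite ?andbF //; lia.
Qed.

Lemma big_option (J : finType) (F : option J -> R) :
  \big[op/idx]_(o : option J) F o = op (F None) (\big[op/idx]_(j : J) F (Some j)).
Proof.
rewrite (bigD1 None) //=; congr (op _ _).
rewrite (reindex_omap Some id) //=; last by case.
by apply: eq_bigl => j; rewrite eqxx.
Qed.

End BigNat.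

Lemma perm_eq_iotaP (T : finType) (f : T -> nat) :
  reflect (injective f /\ forall x, 0 < f x <= #|T|)
          (perm_eq [seq f x | x <- enum T] (iota 1 #|T|)).
Proof.
apply: (iffP idP) => [perm_f | [inj_f f_range]].
  have uniq_f : uniq [seq f x | x <- enum T] by rewrite (perm_uniq perm_f) iota_uniq.
  split; first exact/injectiveP.
  move=> x; have := perm_mem perm_f (f x).
  by rewrite map_f ?mem_enum // mem_iota => /esym; lia.
have uniq_f : uniq [seq f x | x <- enum T] by apply/injectiveP.
apply: uniq_perm => //; first exact: iota_uniq.
have [] := uniq_min_size (s2 := iota 1 #|T|) uniq_f => //.
- by move=> v /mapP[x _ ->]; rewrite mem_iota; have := f_range x; lia.
- by rewrite size_iota size_map -cardE.
Qed.

Notation NDCell n m r s :=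
  {c : 'I_m * 'I_(SB_K n r s).+1 * 'I_(SB_K n r s).+1 | @ndcell n m r s c}.

Section CellWindows.
Variables (n m : nat) (r s : 'I_m -> nat).
Local Notation K := (SB_K n r s).
Local Notation NDCell := (NDCell n m r s).

(* Indices of the diagonal cells in row a of page i and in column b; when there
   is none, 0 and n+1 stand for e_0 = 0 and e_(n+1) = N+1. *)
Definition row_diag (i : 'I_m) (a : nat) : nat := if r i < a then a - r i else 0.
Definition col_diag (b : nat) : nat := if b <= n then b else n.+1.

Definition cell_lo (c : NDCell) : nat := row_diag (val c).1.1 (val (val c).1.2).
Definition cell_hi (c : NDCell) : nat := col_diag (val (val c).2).

Definition page_ndcell (i : 'I_m) (a b : nat) : bool :=
  page_cell n r s i a b && ~~ diag_cell n r i a b.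

Lemma page_lt_K (i : 'I_m) : r i + n + s i < K.+1.
Proof.
have ri_le : r i <= rsum r by rewrite /rsum (bigD1 i) //= leq_addr.
have si_le : s i <= ssum s by rewrite /ssum (bigD1 i) //= leq_addr.
rewrite /SB_K; lia.
Qed.

Lemma cell_hi_le (c : NDCell) : cell_hi c <= n.+1.
Proof. by rewrite /cell_hi /col_diag; case: ifP => // /leqW. Qed.

Variables (R : Type) (idx : R) (op : Monoid.com_law idx) (F : nat -> nat -> R).

Lemma big_ndcell_pages :
  \big[op/idx]_(c : NDCell) F (cell_lo c) (cell_hi c) =
  \big[op/idx]_(i < m) \big[op/idx]_(0 <= a < K.+1)
     \big[op/idx]_(0 <= b < K.+1 | page_ndcell i a b) F (row_diag i a) (col_diag b).
Proof.
pose G (x : 'I_m * 'I_K.+1 * 'I_K.+1) := F (row_diag x.1.1 x.1.2) (col_diag x.2).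
transitivity (\big[op/idx]_(x | @ndcell n m r s x) G x).
  rewrite [RHS](reindex_omap (val : NDCell -> _) insub); last first.
    by move=> x Px; rewrite insubT.
  by apply: eq_bigl => -[x Px] /=; rewrite insubT ?Px /= eqxx.
rewrite (eq_bigl (fun p => true && @ndcell n m r s (p.1, p.2))); last by case.
rewrite (eq_bigr (fun p => G (p.1, p.2))); last by case.
rewrite -(pair_big_dep xpredT (fun ia b => @ndcell n m r s (ia, b))
                        (fun ia b => G (ia, b))).
rewrite (eq_bigr (fun p => (fun i a => \big[op/idx]_(b | @ndcell n m r s ((i, a), b))
                                         G ((i, a), b)) p.1 p.2)); last by case.
rewrite -(pair_big xpredT xpredT (fun i a =>
  \big[op/idx]_(b | @ndcell n m r s ((i, a), b)) G ((i, a), b))) /=.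
apply: eq_bigr => i _; rewrite big_mkord.
by apply: eq_bigr => a _; rewrite big_mkord.
Qed.

Lemma big_page_ndcells (i : 'I_m) :
  \big[op/idx]_(0 <= a < K.+1)
     \big[op/idx]_(0 <= b < K.+1 | page_ndcell i a b) F (row_diag i a) (col_diag b) =
  op (\big[op/idx]_(1 <= a < (r i).+1)
        op (\big[op/idx]_(1 <= b < n.+1) F 0 b)
           (\big[op/idx]_(n.+1 <= b < n + s i + 1) F 0 n.+1))
     (\big[op/idx]_(1 <= j < n.+1)
        op (\big[op/idx]_(j.+1 <= b < n.+1) F j b)
           (\big[op/idx]_(n.+1 <= b < n + s i + 1) F j n.+1)).
Proof.
have hK := page_lt_K i.
have row_range a b : page_ndcell i a b -> 1 <= a < r i + n + 1.
  by rewrite /page_ndcell /page_cell; lia.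
rewrite (eq_big_nat _ _ (F2 := fun a => if 1 <= a < r i + n + 1 then
   \big[op/idx]_(0 <= b < K.+1 | page_ndcell i a b) F (row_diag i a) (col_diag b)
   else idx)); last first.
  move=> a _; case: ifP => // a_out; apply: big_pred0 => b.
  by apply/negP => /row_range; rewrite a_out.
rewrite -big_mkcond (@big_nat_cond_itv _ _ _ _ 1 (r i + n + 1)) //; last by lia.
rewrite (big_cat_nat _ (n := (r i).+1)) //=; last by lia.
have split_cols lo a : 1 <= a <= r i + n ->
  \big[op/idx]_(0 <= b < K.+1 | page_ndcell i a b) F lo (col_diag b) =
  op (\big[op/idx]_((row_diag i a).+1 <= b < n.+1) F lo b)
     (\big[op/idx]_(n.+1 <= b < n + s i + 1) F lo n.+1).
  move=> a_in; rewrite (@big_nat_cond_itv _ _ _ _ (row_diag i a).+1 (n + s i + 1)).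
  - rewrite (big_cat_nat _ (n := n.+1)) /=; [|rewrite /row_diag; case: ifP; lia|lia].
    by congr (op _ _); apply: eq_big_nat => b b_in; rewrite /col_diag; case: ifP => //; lia.
  - by lia.
  - by move=> b _; rewrite /page_ndcell /page_cell /diag_cell /row_diag; case: ifP; lia.
congr (op _ _).
  apply: eq_big_nat => a a_in; rewrite split_cols; last by lia.
  by rewrite /row_diag ifF //; lia.
rewrite -(add1n (r i)) big_addn (_ : r i + n + 1 - r i = n.+1); last by lia.
apply: eq_big_nat => j j_in; rewrite split_cols; last by lia.
by rewrite /row_diag ifT //; [rewrite addnK | lia].
Qed.

Lemma big_ndcells :
  \big[op/idx]_(c : NDCell) F (cell_lo c) (cell_hi c) =
  \big[op/idx]_(i < m)
    op (\big[op/idx]_(1 <= a < (r i).+1)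
          op (\big[op/idx]_(1 <= b < n.+1) F 0 b)
             (\big[op/idx]_(n.+1 <= b < n + s i + 1) F 0 n.+1))
       (\big[op/idx]_(1 <= j < n.+1)
          op (\big[op/idx]_(j.+1 <= b < n.+1) F j b)
             (\big[op/idx]_(n.+1 <= b < n + s i + 1) F j n.+1)).
Proof. by rewrite big_ndcell_pages; apply: eq_bigr => i _; apply: big_page_ndcells. Qed.

End CellWindows.

Lemma sum_sub_bin2 n : \sum_(1 <= j < n.+1) (n - j) = 'C(n, 2).
Proof. by rewrite big_nat_rev big_add1 /= -bin2_sum; apply: eq_big_nat => j; lia. Qed.

Lemma card_ndcells n m (r s : 'I_m -> nat) :
  #|{: NDCell n m r s}| + n = SB_N n r s.
Proof.
rewrite -sum1_card (big_ndcells n r s addn (fun _ _ => 1)) /= /SB_N /rsum /ssum.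
rewrite (eq_bigr (fun i => r i * n + r i * s i + ('C(n, 2) + n * s i))); last first.
  move=> i _; rewrite !sum_nat_const_nat.
  rewrite (eq_big_nat _ _ (F2 := fun j => (n - j) + s i)); last first.
    by move=> j j_in; rewrite !sum_nat_const_nat !muln1; lia.
  by rewrite big_split /= sum_sub_bin2 sum_nat_const_nat; lia.
rewrite !big_split /= -big_distrl -big_distrr /= sum_nat_const card_ord; lia.
Qed.

Section Expansion.
Local Open Scope ring_scope.
Variables (n m : nat) (r s : 'I_m -> nat).
Local Notation NDCell := (NDCell n m r s).
Local Notation N := (SB_N n r s).

Lemma prod_tsum_cell_windows :
  \prod_(c : NDCell) tsum n (cell_lo c) (cell_hi c) =
  \prod_(1 <= i < n.+1) (tsum n 0 i ^+ rsum r * tsum n i n.+1 ^+ ssum s)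
    * \prod_(i < m) tsum n 0 n.+1 ^+ (r i * s i)
    * \prod_(1 <= i < n.+1) \prod_(i.+1 <= j < n.+1) tsum n i j ^+ m.
Proof.
apply/esym; rewrite (big_ndcells n r s *%R (tsum n)) /=.
set A := \prod_(1 <= b < n.+1) tsum n 0 b.
set B := fun j => tsum n j n.+1.
set D := fun j => \prod_(j.+1 <= b < n.+1) tsum n j b.
(* Page i contributes A^r_i B_0^(r_i s_i) through its rows above the diagonal
   and \prod_j D_j B_j^s_i through the others. *)
rewrite [RHS](eq_bigr (fun i => (A ^+ r i * B 0%N ^+ (r i * s i)%N) *
     (\prod_(1 <= j < n.+1) D j * \prod_(1 <= j < n.+1) B j ^+ s i))); last first.
  move=> i _; rewrite !prodr_const_nat.
  under eq_big_nat => j _ do rewrite prodr_const_nat.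
  rewrite big_split /= exprMn -exprM.
  rewrite (_ : (n + s i + 1 - n.+1 = s i)%N); last by lia.
  by rewrite (_ : ((r i).+1 - 1 = r i)%N) 1?mulnC //; lia.
rewrite big_split /= big_split /= big_split /= prodrXr -/(rsum r) big_split /=.
rewrite [X in _ = _ * (X * _)]exchange_big [X in _ = _ * (_ * X)]exchange_big /=.
under [in RHS]eq_big_nat => j _ do rewrite prodr_const card_ord.
rewrite [X in _ = _ * (_ * X)](eq_big_nat _ _ (F2 := fun j => B j ^+ ssum s)); last first.
  by move=> j _; rewrite prodrXr.
rewrite [X in _ = X * _ * _]prodrXr -/(rsum r) prodrXl -/A.
rewrite [X in _ * X = _](eq_big_nat _ _ (F2 := fun i => D i ^+ m)); last first.
  by move=> i _; rewrite prodrXl.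
rewrite /B /=; ring.
Qed.

Definition in_windows (g : {ffun NDCell -> 'I_n.+1}) : bool :=
  [forall c, (cell_lo c <= g c < cell_hi c)%N].

Definition gap_size (g : {ffun NDCell -> 'I_n.+1}) (j : 'I_n.+1) : nat :=
  #|[pred c | g c == j]|.

Definition gap_sizes (g : {ffun NDCell -> 'I_n.+1}) : {ffun 'I_n.+1 -> 'I_N.+1} :=
  [ffun j => inord (gap_size g j)].

Definition window_assignments (d : {ffun 'I_n.+1 -> 'I_N.+1}) :=
  [set g | in_windows g && (gap_sizes g == d)].

Lemma gap_size_lt g j : (gap_size g j < N.+1)%N.
Proof.
rewrite ltnS -(card_ndcells n r s); apply: leq_trans (leq_addr _ _).
exact: max_card.
Qed.

Lemma gap_sizesE g j : val (gap_sizes g j) = gap_size g j.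
Proof. by rewrite ffunE; apply: inordK; apply: gap_size_lt. Qed.

Lemma sum_gap_size g : (\sum_j gap_size g j + n)%N = N.
Proof.
rewrite -(card_ndcells n r s) -sum1_card (partition_big g xpredT) //=.
by congr (_ + _)%N; apply: eq_bigr => j _; rewrite /gap_size -sum1_card.
Qed.

Lemma tsumE a b : (b <= n.+1)%N ->
  tsum n a b = \sum_(k < n.+1 | (a <= k < b)%N) 'X_k.
Proof.
move=> b_le; rewrite (eq_bigr (fun k : 'I_n.+1 => 'X_(inord (val k))));
  last by move=> k _; rewrite inord_val.
rewrite -(big_mkord (fun k => (a <= k < b)%N) (fun k => 'X_(inord k))).
by rewrite (big_nat_cond_itv _ (lo := a) (hi := b)).
Qed.

Lemma expand_prod_tsum_cell_windows :
  \prod_(c : NDCell) tsum n (cell_lo c) (cell_hi c) =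
  \sum_(d : {ffun 'I_n.+1 -> 'I_N.+1})
     (#|window_assignments d|)%:R *: \prod_(j < n.+1) 'X_j ^+ val (d j).
Proof.
rewrite (eq_bigr (fun c => \sum_(k < n.+1 | (cell_lo c <= k < cell_hi c)%N) 'X_k));
  last by move=> c _; rewrite tsumE // cell_hi_le.
rewrite bigA_distr_big_dep /= (partition_big gap_sizes predT) //=.
apply: eq_bigr => d _; rewrite scaler_nat -sumr_const; apply: eq_big.
  by move=> g; rewrite !inE.
move=> g /andP[_ /eqP <-]; rewrite (partition_big g predT) //=.
apply: eq_bigr => j _; rewrite gap_sizesE (eq_bigr (fun _ => 'X_j)) ?prodr_const //.
by move=> c /eqP ->.
Qed.

End Expansion.

Section Gaps.
Variables (n m : nat) (r s : 'I_m -> nat).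
Local Notation NDCell := (NDCell n m r s).
Local Notation N := (SB_N n r s).
Variable d : {ffun 'I_n.+1 -> 'I_N.+1}.

Definition gap (i : nat) : nat := val (d (inord i)).

(* The value that d forces on e_j. *)
Definition diag_pos (j : nat) : nat := \sum_(0 <= i < j) (gap i).+1.

Lemma gap_ord (j : 'I_n.+1) : gap j = val (d j).
Proof. by rewrite /gap inord_val. Qed.

Lemma diag_pos0 : diag_pos 0 = 0.
Proof. by rewrite /diag_pos big_geq. Qed.

Lemma diag_posS j : diag_pos j.+1 = diag_pos j + (gap j).+1.
Proof. by rewrite /diag_pos big_nat_recr. Qed.

Lemma leq_diag_pos j k : j <= k -> diag_pos j <= diag_pos k.
Proof.
by move=> jk; rewrite /diag_pos [X in _ <= X](big_cat_nat _ (n := j)) //= leq_addr.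
Qed.

Lemma ltn_diag_pos j k : j < k -> diag_pos j < diag_pos k.
Proof. by move=> jk; apply: leq_trans (leq_diag_pos jk); rewrite diag_posS; lia. Qed.

Lemma diag_pos_inj : injective diag_pos.
Proof.
move=> j k eq_jk; case: (ltngtP j k) => // [/ltn_diag_pos | /ltn_diag_pos].
  by rewrite eq_jk ltnn.
by rewrite eq_jk ltnn.
Qed.

Lemma sum_gap : \sum_(j < n.+1) val (d j) + n.+1 = diag_pos n.+1.
Proof.
rewrite /diag_pos (eq_big_nat _ _ (F2 := fun i => gap i + 1)); last by move=> i _; rewrite addn1.
rewrite big_split /= sum_nat_const_nat subn0 muln1 big_mkord; congr (_ + _).
by apply: eq_bigr => j _; rewrite gap_ord.
Qed.

Section InGap.
Variables (j : nat) (v : nat).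
Hypothesis v_in_gap : diag_pos j < v < diag_pos j.+1.

Lemma diag_pos_lt_gap k : (diag_pos k < v) = (k <= j).
Proof.
case: (leqP k j) => [kj | jk]; first by have := leq_diag_pos kj; lia.
by have := leq_diag_pos jk; lia.
Qed.

Lemma gap_lt_diag_pos k : (v < diag_pos k) = (j < k).
Proof.
case: (ltnP j k) => [jk | kj]; first by have := leq_diag_pos jk; lia.
by have := leq_diag_pos kj; lia.
Qed.

Lemma gap_neq_diag_pos k : v != diag_pos k.
Proof.
apply/eqP => v_eq; have := diag_pos_lt_gap k; have := gap_lt_diag_pos k.
by rewrite -v_eq ltnn; lia.
Qed.

End InGap.

Lemma in_some_gap v k : diag_pos 0 < v -> v < diag_pos k ->
    (forall i, 0 < i < k -> v != diag_pos i) ->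
  exists2 j, j < k & diag_pos j < v < diag_pos j.+1.
Proof.
elim: k => [|k IH] v_gt0 v_lt v_ne; first by lia.
case: (ltnP v (diag_pos k)) => v_lt_k.
  have [j jk j_gap] := IH v_gt0 v_lt_k (fun i i_in => v_ne i ltac:(lia)).
  by exists j => //; lia.
exists k => //; rewrite v_lt andbT ltn_neqAle v_lt_k andbT.
case: k {IH v_lt v_lt_k} v_ne => [|k] v_ne; first by rewrite eq_sym; lia.
by rewrite eq_sym; apply: v_ne; lia.
Qed.

Definition gap_of (v : 'I_N.+1) : option 'I_n.+1 :=
  [pick j : 'I_n.+1 | diag_pos j < v < diag_pos j.+1].

Lemma gap_ofP v (j : 'I_n.+1) :
  (gap_of v == Some j) = (diag_pos j < v < diag_pos j.+1).
Proof.
rewrite /gap_of; case: pickP => [j' j'_gap | no_gap]; last by rewrite no_gap.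
apply/eqP/idP => [[<-] // | j_gap]; congr Some; apply: val_inj => /=.
have := diag_pos_lt_gap j'_gap j; have := diag_pos_lt_gap j_gap j'.
rewrite (andP j_gap).1 (andP j'_gap).1 => /esym j'_le_j /esym j_le_j'.
by apply/eqP; rewrite eqn_leq j_le_j' j'_le_j.
Qed.

Lemma card_gap_of (j : 'I_n.+1) : diag_pos j.+1 <= N.+1 ->
  #|[pred v : 'I_N.+1 | gap_of v == Some j]| = val (d j).
Proof.
move=> j_le; rewrite -gap_ord -sum1_card.
rewrite (eq_bigl (fun v : 'I_N.+1 => diag_pos j < v < diag_pos j.+1));
  last by move=> v; rewrite inE gap_ofP.
rewrite -(big_mkord (fun v => diag_pos j < v < diag_pos j.+1) (fun _ => 1)).
rewrite (big_nat_cond_itv _ (lo := (diag_pos j).+1) (hi := diag_pos j.+1)) //.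
by rewrite sum_nat_const_nat diag_posS; lia.
Qed.

End Gaps.

Section Books.
Variables (n m : nat) (r s : 'I_m -> nat).
Local Notation NDCell := (NDCell n m r s).
Local Notation N := (SB_N n r s).
Local Notation filling := (filling n r s).
Variable d : {ffun 'I_n.+1 -> 'I_N.+1}.
Local Notation diag_pos := (diag_pos d).
Local Notation gap_of := (gap_of d).
Local Notation SBd := (@SB n m r s (fun j => val (d j))).
Local Notation gap_size := (@gap_size n m r s).

Definition cell_condition (f : filling) (c : NDCell) : bool :=
  let i := (val c).1.1 in let a := val (val c).1.2 in let b := val (val c).2 in
  let x := val (f (inr c)) in
  ((r i < a) ==> (diag_entry f (a - r i) < x)) && ((b <= n) ==> (x < diag_entry f b)).

Lemma book_conditionE f : book_condition f = [forall c, cell_condition f c].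
Proof. by []. Qed.

Lemma card_book : #|{: book_cell n r s}| = N.
Proof. by rewrite card_sum card_ord addnC card_ndcells. Qed.

Lemma diag_entry_ord (f : filling) (k : 'I_n) : diag_entry f k.+1 = f (inl k).
Proof. by rewrite /diag_entry /= valK. Qed.

Lemma e_diag (f : filling) j : 0 < j <= n -> e_ f j = diag_entry f j.
Proof. by rewrite /e_; case: j => // j /andP[_ ->]. Qed.

Lemma e_last (f : filling) : e_ f n.+1 = N.+1.
Proof. by rewrite /e_ ltnn. Qed.

Lemma gap_conditionP (f : filling) :
  reflect (forall j, j <= n.+1 -> e_ f j = diag_pos j)
          [forall j : 'I_n.+1, e_ f j.+1 == e_ f j + val (d j) + 1].
Proof.
apply: (iffP forallP) => [e_succ | e_eq j]; last first.
  by rewrite e_eq // e_eq 1?ltnW // diag_posS gap_ord addn1 addnS.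
elim=> [|j IH] j_le; first by rewrite diag_pos0.
move/eqP: (e_succ (Ordinal j_le)) => /= ->.
by rewrite IH 1?ltnW // diag_posS -(gap_ord d (Ordinal j_le)) addn1 addnS.
Qed.

Lemma cell_condition_window (f : filling) (c : NDCell) j :
    (forall k, k <= n.+1 -> e_ f k = diag_pos k) -> j < n.+1 ->
    diag_pos j < val (f (inr c)) < diag_pos j.+1 ->
  cell_condition f c = (cell_lo c <= j < cell_hi c).
Proof.
move=> e_eq jn v_gap; case: c v_gap => [[[i a] b] c_nd] /= v_gap.
have [/and3P[a_rng b_rng _] _] := andP c_nd; rewrite /= in a_rng b_rng.
rewrite /cell_condition /cell_lo /cell_hi /row_diag /col_diag /=; congr (_ && _).
  case: (ltnP (r i) a) => ria /=; last by rewrite leq0n.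
  by rewrite -e_diag ?e_eq ?(diag_pos_lt_gap v_gap) //; lia.
case: (leqP b n) => bn /=; last by rewrite jn.
by rewrite -e_diag ?e_eq ?(gap_lt_diag_pos v_gap) //; lia.
Qed.

Definition gaps_fit : bool := diag_pos n.+1 == N.+1.

Definition in_window (c : NDCell) (o : option 'I_n.+1) : bool :=
  if o is Some j then cell_lo c <= j < cell_hi c else false.

Definition offdiag_fillings := [set h : {ffun NDCell -> 'I_N.+1} |
  injectiveb h && [forall c, in_window c (gap_of (h c))]].

Definition offdiag (f : filling) : {ffun NDCell -> 'I_N.+1} := [ffun c => f (inr c)].

Definition book_of (h : {ffun NDCell -> 'I_N.+1}) : filling :=
  [ffun x : book_cell n r s => match x with inl k => inord (diag_pos k.+1) | inr c => h c end].

Lemma offdiag_book_of h : offdiag (book_of h) = h.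
Proof. by apply/ffunP => c; rewrite !ffunE. Qed.

Lemma mem_SB_offdiag (f : filling) : f \in SBd ->
  [/\ gaps_fit, forall k : 'I_n, f (inl k) = diag_pos k.+1 :> nat
    & offdiag f \in offdiag_fillings].
Proof.
rewrite inE => /andP[/andP[f_fill f_book] /gap_conditionP e_eq].
have fit : gaps_fit by rewrite /gaps_fit -e_eq // e_last.
have f_diag (k : 'I_n) : f (inl k) = diag_pos k.+1 :> nat.
  by rewrite -diag_entry_ord -e_diag ?e_eq //; have := ltn_ord k; lia.
move: f_fill; rewrite /is_filling -[X in iota 1 X]card_book.
case/perm_eq_iotaP=> f_inj; rewrite card_book => f_range.
split=> //; rewrite inE; apply/andP; split.
  by apply/injectiveP => c c'; rewrite !ffunE => /(congr1 val)/f_inj[].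
apply/forallP => c; rewrite ffunE.
have v_rng : 0 < f (inr c) <= N := f_range (inr c).
have [j jn j_gap] : exists2 j, j < n.+1 & diag_pos j < f (inr c) < diag_pos j.+1.
  apply: in_some_gap => [||i i_rng]; first by rewrite diag_pos0; lia.
    by rewrite (eqP fit); lia.
  apply/eqP => v_eq; have i_lt : i.-1 < n by lia.
  have := f_diag (Ordinal i_lt); rewrite /= prednK; last by lia.
  by rewrite -v_eq => /f_inj.
have -> : gap_of (f (inr c)) = Some (Ordinal jn) by apply/eqP; rewrite gap_ofP.
by rewrite /= -(cell_condition_window e_eq) //; apply: (forallP f_book c).
Qed.

Lemma offdiag_fillings_gap h c : h \in offdiag_fillings ->
  exists2 j : 'I_n.+1, diag_pos j < h c < diag_pos j.+1 & cell_lo c <= j < cell_hi c.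
Proof.
rewrite inE => /andP[_ /forallP /(_ c)].
by case E: (gap_of (h c)) => [j|] //; exists j; rewrite -?gap_ofP ?E.
Qed.

Section BookOf.
Variable h : {ffun NDCell -> 'I_N.+1}.
Hypotheses (fit : gaps_fit) (h_off : h \in offdiag_fillings).

Lemma book_of_diag (k : 'I_n) : book_of h (inl k) = diag_pos k.+1 :> nat.
Proof. by rewrite ffunE inordK // -(eqP fit); apply: ltn_diag_pos; rewrite ltnS. Qed.

Lemma e_book_of k : k <= n.+1 -> e_ (book_of h) k = diag_pos k.
Proof.
case: k => [|k] k_le; first by rewrite diag_pos0.
case: (ltnP k n) => kn; last first.
  have -> : k = n by lia.
  by rewrite e_last (eqP fit).
by rewrite e_diag ?(diag_entry_ord _ (Ordinal kn)) ?book_of_diag //; lia.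
Qed.

Lemma is_filling_book_of : is_filling (book_of h).
Proof.
rewrite /is_filling -[X in iota 1 X]card_book; apply/perm_eq_iotaP; split.
  case=> [k | c] [k' | c']; rewrite /= ?book_of_diag ?ffunE.
  - by move/diag_pos_inj => [] /val_inj ->.
  - have [j j_gap _] := offdiag_fillings_gap c' h_off => eq_v.
    by case/negP: (gap_neq_diag_pos j_gap k.+1); rewrite eq_v.
  - have [j j_gap _] := offdiag_fillings_gap c h_off => eq_v.
    by case/negP: (gap_neq_diag_pos j_gap k'.+1); rewrite eq_v.
  - by move: h_off; rewrite inE => /andP[/injectiveP h_inj _] /val_inj/h_inj ->.
rewrite card_book => x; suff : 0 < book_of h x <= N by [].
case: x => [k | c].
  have := ltn_diag_pos d (ltn0Sn k); have := ltn_diag_pos d (ltn_ord k : k.+1 < n.+1).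
  by rewrite book_of_diag (eqP fit) diag_pos0; lia.
have -> : book_of h (inr c) = h c :> nat by rewrite ffunE.
have [j /andP[j_lo j_hi] _] := offdiag_fillings_gap c h_off.
apply/andP; split; first exact: leq_ltn_trans (leq0n _) j_lo.
by rewrite -ltnS; apply: leq_trans j_hi _; rewrite -(eqP fit) leq_diag_pos.
Qed.

Lemma book_of_SB : book_of h \in SBd.
Proof.
rewrite inE; apply/andP; split; last exact/gap_conditionP/e_book_of.
apply/andP; split; first exact: is_filling_book_of.
rewrite book_conditionE; apply/forallP => c.
have [j j_gap j_win] := offdiag_fillings_gap c h_off.
by rewrite (cell_condition_window (j := j) e_book_of) // ffunE.
Qed.

End BookOf.

Lemma card_SB_offdiag : gaps_fit ->
  #|SBd| = #|offdiag_fillings|.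
Proof.
move=> fit; rewrite -!sum1_card (reindex_onto book_of offdiag); last first.
  move=> f /mem_SB_offdiag[_ f_diag _]; apply/ffunP => -[k|c]; rewrite !ffunE //.
  by rewrite -f_diag inord_val.
apply: eq_bigl => h; rewrite offdiag_book_of eqxx andbT.
by apply/idP/idP => [/mem_SB_offdiag[] | /(book_of_SB fit)]; rewrite ?offdiag_book_of.
Qed.

Lemma card_offdiag_fillings : gaps_fit ->
  #|offdiag_fillings| =
  \sum_(g | in_windows g) \prod_(j < n.+1) val (d j) ^_ gap_size g j.
Proof.
move=> /eqP fit.
pose gaps_of (h : {ffun NDCell -> 'I_N.+1}) := [ffun c => odflt ord0 (gap_of (h c))].
rewrite -sum1_card (partition_big gaps_of (@in_windows n m r s)) /=; last first.
  move=> h; rewrite inE => /andP[_ /forallP h_win]; apply/forallP => c.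
  by move: (h_win c); rewrite ffunE; case: (gap_of (h c)).
apply: eq_bigr => g g_win.
transitivity #|[set h : {ffun NDCell -> 'I_N.+1} |
                injectiveb h && [forall c, gap_of (h c) == Some (g c)]]|.
  rewrite -sum1_card; apply: eq_bigl => h; rewrite !inE; apply/idP/idP.
    case/andP=> /andP[-> /forallP h_win] /eqP <-; apply/forallP => c.
    by move: (h_win c); rewrite ffunE; case: (gap_of (h c)).
  case/andP=> -> /forallP h_gap /=; apply/andP; split.
    by apply/forallP => c; rewrite (eqP (h_gap c)); apply: (forallP g_win).
  by apply/eqP/ffunP => c; rewrite ffunE (eqP (h_gap c)).
rewrite (card_inj_ffuns_labelled (fun c => Some (g c)) gap_of) big_option /=.
rewrite (_ : #|[pred c | Some (g c) == None]| = 0) ?ffactn0 ?mul1n; last exact: eq_card0.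
apply: eq_bigr => j _; rewrite card_gap_of; last by rewrite -fit leq_diag_pos.
by congr (_ ^_ _); apply: eq_card => c; rewrite !inE.
Qed.

Lemma card_SB_window_assignments :
  #|SBd| = (\prod_(j < n.+1) (val (d j))`!) * #|window_assignments d|.
Proof.
have [fit | not_fit] := boolP gaps_fit; last first.
  have -> : #|SBd| = 0.
    by apply: eq_card0 => f; apply/negP => /mem_SB_offdiag[fit _ _]; rewrite fit in not_fit.
  have -> : #|window_assignments d| = 0.
    apply: eq_card0 => g; rewrite inE; apply/negP => /andP[_ /eqP g_d].
    have sum_eq : \sum_j gap_size g j = \sum_j val (d j).
      by apply: eq_bigr => j _; rewrite -g_d gap_sizesE.
    case/negP: not_fit; apply/eqP; rewrite -sum_gap addnS -sum_eq.
    by congr _.+1; apply: sum_gap_size.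
  by rewrite muln0.
rewrite card_SB_offdiag // card_offdiag_fillings //.
have sum_eq g : \sum_j gap_size g j = \sum_j val (d j).
  by apply: (@addIn n.+1); rewrite sum_gap (eqP fit) addnS sum_gap_size.
under eq_bigr => g _ do rewrite (prod_ffact_eq_sum (sum_eq g)).
rewrite -big_mkcondr /= sum_nat_const mulnC; congr (_ * _).
apply: eq_card => g; rewrite !inE; congr (_ && _).
apply/forallP/eqP => [gap_eq | <- j]; last by rewrite gap_sizesE.
by apply/ffunP => j; apply: val_inj; rewrite gap_sizesE (eqP (gap_eq j)).
Qed.

End Books.

Local Open Scope ring_scope.

Theorem proposition4p11 (n m : nat) (r s : 'I_m -> nat) :
  (0 < n)%N -> (0 < m)%N ->
  \sum_(d : {ffun 'I_n.+1 -> 'I_(@SB_N n m r s).+1})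
     (((#|@SB n m r s (fun j => val (d j))|)%:R
        / (\prod_(j < n.+1) ((val (d j))`!)%:R) : rat)
      *: \prod_(j < n.+1) 'X_j ^+ (val (d j)))
  = \prod_(1 <= i < n.+1)
        (tsum n 0 i ^+ @rsum m r * tsum n i n.+1 ^+ @ssum m s)
    * \prod_(i < m) tsum n 0 n.+1 ^+ (r i * s i)
    * \prod_(1 <= i < n.+1) \prod_(i.+1 <= j < n.+1) tsum n i j ^+ m.
Proof.
move=> _ _; rewrite -prod_tsum_cell_windows expand_prod_tsum_cell_windows.
apply: eq_bigr => d _; congr (_ *: _).
rewrite card_SB_window_assignments natrM -natr_prod mulrC mulrA mulVf ?mul1r //.
by rewrite pnatr_eq0 -lt0n prodn_gt0 // => j; apply: fact_gt0.
Qed.
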